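(* Let $\mathrm{dist}$ be a distance measure and let $\Pi$ be an SSP-NP-complete problem such that \textsc{3Sat} is blow-up SSP reducible to $\Pi$ with respect to $\mathrm{dist}$. Then every SSP problem $\Pi'$ to which there is a blow-up preserving SSP reduction from $\Pi$ is such that \textsc{3Sat} is blow-up SSP reducible to $\Pi'$ with respect to $\mathrm{dist}$.
   Context: An SSP problem is $\Pi = (\mathcal{I}, \mathcal{U}, \mathcal{S})$ with instances $\mathcal{I} \subseteq \{0,1\}^*$, and for each $I$ a universe $\mathcal{U}(I)$ and solution set $\mathcal{S}(I) \subseteq 2^{\mathcal{U}(I)}$; $I$ is a yes-instance iff $\mathcal{S}(I)\ne\emptyset$. \textsc{Satisfiability} as SSP problem: instance = literal set $L = \{\ell_1,\dots,\ell_n,\overline{\ell}_1,\dots,\overline{\ell}_n\}$ and clauses $C_j \subseteq L$; universe $L$; solutions are the $L' \subseteq L$ with $|L'\cap\{\ell_i,\overline{\ell}_i\}|=1$ for all $i$ and $|L'\cap C_j| \ge 1$ for all $j$. \textsc{3Sat}: the same with every clause having three literals. An SSP reduction from $(\mathcal{I},\mathcal{U},\mathcal{S})$ to $(\mathcal{I}',\mathcal{U}',\mathcal{S}')$: polynomial-time $g$ with $\mathcal{S}(I)\ne\emptyset \iff \mathcal{S}'(g(I))\ne\emptyset$ and polynomial-time injective $f_I : \mathcal{U}(I)\to\mathcal{U}'(g(I))$ with $\{f_I(S): S\in\mathcal{S}(I)\} = \{S'\cap f_I(\mathcal{U}(I)) : S'\in\mathcal{S}'(g(I))\}$. A problem is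 SSP-NP-complete if its solutions are verifiable in polynomial time and there is an SSP reduction from \textsc{Satisfiability} to it. A blow-up preserving SSP reduction from $\Pi$ to $\Pi'$ is an SSP reduction $(g, f_I)$ such that for every instance $I$ and every $u' \in \mathcal{U}'(g(I))$, either $u' \in f_I(\mathcal{U}(I))$, or $u'$ lies in no solution $S' \in \mathcal{S}'(g(I))$, or $u'$ lies in every solution $S' \in \mathcal{S}'(g(I))$. A distance measure assigns to each set $U$ a polynomial-time computable $\mathrm{dist}_U : 2^U\times 2^U\to\mathbb{R}_{\ge0}$, invariant under injective maps ($\mathrm{dist}_U(A_1,A_2)=\mathrm{dist}_{U'}(f(A_1),f(A_2))$), invariant under union ($\mathrm{dist}_U(A_1,A_2)=\mathrm{dist}_U(A_1\cup\{x\},A_2\cup\{x\})$ for $x\notin A_1\cup A_2$), with $\mathrm{dist}_U(A,A)=0$. \textsc{3Sat} is blow-up SSP reducible to $\Pi'=(\mathcal{I}',\mathcal{U}',\mathcal{S}')$ with respect to $\mathrm{dist}$ if for every \textsc{3Sat} instance $I$ with literals $L$ and every $L_b\subseteq L$ with $\ell_i\in L_b\iff\overline{\ell}_i\in L_b$ there is an SSP reduction $(g,f_I)$ and a polynomial-time computable $\beta_I\in\mathbb{N}$ such that for all $S_1,S_2\in\mathcal{S}'(g(I))$: $f_I(L_b)\cap S_1 = f_I(L_b)\cap S_2 \iff \mathrm{dist}(S_1,S_2)\le\beta_I$. *)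

From mathcomp Require Import all_boot all_order all_algebra.
From mathcomp Require Import finmap.
Set Implicit Arguments. Unset Strict Implicit. Unset Printing Implicit Defensive.
Import Order.TTheory GRing.Theory Num.Theory.
Local Open Scope fset_scope.

Definition word := seq bool.

Definition pairw (x y : word) : word :=
  flatten [seq [:: b; b] | b <- x] ++ [:: true; false] ++ y.
Fixpoint unpairw (w : word) : word * word :=
  match w with
  | b1 :: b2 :: r => if b1 == b2 then let: (x, y) := unpairw r in (b1 :: x, y)
                     else ([::], r)
  | _ => ([::], [::])
  end.
Definition fstw (w : word) : word := (unpairw w).1.
Definition sndw (w : word) : word := (unpairw w).2.

Definition nat2word (n : nat) : word :=
  [seq odd (n %/ 2 ^ i) | i <- iota 0 (trunc_log 2 n).+1].

Definition encfs (S : {fset word}) : word :=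
  foldr pairw [::] (enum_fset S).

(** Polynomial-time computability is not available in the libraries; the
    theorem is stated for every predicate PT on word functions that has the
    closure properties enjoyed by polynomial-time computable functions. *)
Definition poly_class (PT : (word -> word) -> Prop) : Prop :=
  [/\ PT id, PT fstw, PT sndw,
      (forall f g, PT f -> PT g -> PT (f \o g)) &
      (forall f g, PT f -> PT g -> PT (fun w => pairw (f w) (g w)))].

Record SSP := {
  ssp_inst : word -> Prop;
  ssp_univ : word -> {fset word};
  ssp_sol  : word -> {fset word} -> Prop;
  ssp_sol_sub : forall I S, ssp_sol I S -> S `<=` ssp_univ I
}.

Definition fimg (f : word -> word) (A : {fset word}) : {fset word} :=
  [fset f x | x in A].

(** SSP reduction (g, f_I) from P to P'; f_I is represented as f I. *)
Definition ssp_red (PT : (word -> word) -> Prop) (P P' : SSP)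
    (g : word -> word) (f : word -> word -> word) : Prop :=
  [/\ PT g /\ PT (fun w => f (fstw w) (sndw w)),
      (forall I, ssp_inst P I -> ssp_inst P' (g I)),
      (forall I, ssp_inst P I ->
         (exists S, ssp_sol P I S) <-> (exists S', ssp_sol P' (g I) S')),
      (forall I, ssp_inst P I ->
         {in ssp_univ P I &, injective (f I)} /\
         (forall u, u \in ssp_univ P I -> f I u \in ssp_univ P' (g I))) &
      (forall I, ssp_inst P I -> forall T : {fset word},
         (exists S, ssp_sol P I S /\ T = fimg (f I) S) <->
         (exists S', ssp_sol P' (g I) S' /\
                     T = S' `&` fimg (f I) (ssp_univ P I)))].

Definition blowup_preserving_red (PT : (word -> word) -> Prop) (P P' : SSP)
    (g : word -> word) (f : word -> word -> word) : Prop :=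
  ssp_red PT P P' g f /\
  forall I, ssp_inst P I -> forall u', u' \in ssp_univ P' (g I) ->
    [\/ u' \in fimg (f I) (ssp_univ P I),
        (forall S', ssp_sol P' (g I) S' -> u' \notin S') |
        (forall S', ssp_sol P' (g I) S' -> u' \in S')].

(* a formula: number of variables n and clauses; literal (i, true) is ℓ_(i+1),
   (i, false) is its negation *)
Definition cnf := (nat * seq (seq (nat * bool)))%type.

Definition word2nat (w : word) : nat := foldr (fun (b : bool) (n : nat) => (nat_of_bool b + n.*2)%N) 0 w.
Definition dec_cnf (w : word) : option cnf := choice.unpickle (word2nat w).

Definition litw (l : nat * bool) : word := l.2 :: nseq l.1 false.

Definition lits (F : cnf) : {fset word} :=
  [fset litw (i, b) | i in [fset x | x in iota 0 F.1], b in [fset true; false]].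

Definition clause_set (C : seq (nat * bool)) : {fset word} :=
  [fset litw l | l in [fset x | x in C]].

Definition cnf_wf (F : cnf) : Prop :=
  forall C, C \in F.2 -> forall l, l \in C -> l.1 < F.1.

Definition cnf_sol (F : cnf) (S : {fset word}) : Prop :=
  [/\ S `<=` lits F,
      (forall i, i < F.1 -> #|` S `&` [fset litw (i, true); litw (i, false)]| = 1) &
      (forall C, C \in F.2 -> 1 <= #|` S `&` clause_set C|)].

Definition sat_inst (w : word) : Prop :=
  if dec_cnf w is Some F then cnf_wf F else False.
Definition three_sat_inst (w : word) : Prop :=
  if dec_cnf w is Some F then
    cnf_wf F /\ (forall C, C \in F.2 -> #|` clause_set C| = 3)
  else False.
Definition sat_univ (w : word) : {fset word} :=
  if dec_cnf w is Some F then lits F else fset0.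
Definition sat_sol (w : word) (S : {fset word}) : Prop :=
  if dec_cnf w is Some F then cnf_sol F S else False.

Lemma sat_sol_sub I S : sat_sol I S -> S `<=` sat_univ I.
Proof. by rewrite /sat_sol /sat_univ; case: (dec_cnf I) => // F []. Qed.

Definition Satisfiability : SSP := @Build_SSP sat_inst sat_univ sat_sol sat_sol_sub.
Definition ThreeSat : SSP := @Build_SSP three_sat_inst sat_univ sat_sol sat_sol_sub.

Definition ssp_verifiable (PT : (word -> word) -> Prop) (P : SSP) : Prop :=
  exists v, PT v /\ forall I S, ssp_inst P I ->
    (v (pairw I (encfs S)) = [:: true] <-> ssp_sol P I S).

Definition ssp_np_complete (PT : (word -> word) -> Prop) (P : SSP) : Prop :=
  ssp_verifiable PT P /\ exists g f, ssp_red PT Satisfiability P g f.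

(** * Distance measures: dist U A1 A2 = dist_U(A1, A2) for A1, A2 ⊆ U *)
Definition distance_measure (R : realFieldType)
    (dist : {fset word} -> {fset word} -> {fset word} -> R) : Prop :=
  [/\ (forall U A1 A2, A1 `<=` U -> A2 `<=` U -> 0 <= dist U A1 A2)%R,
      (forall U U' (f : word -> word), {in U &, injective f} ->
         (forall x, x \in U -> f x \in U') ->
         forall A1 A2, A1 `<=` U -> A2 `<=` U ->
           dist U A1 A2 = dist U' (fimg f A1) (fimg f A2)),
      (forall U A1 A2 x, A1 `<=` U -> A2 `<=` U -> x \in U ->
         x \notin A1 `|` A2 -> dist U A1 A2 = dist U (x |` A1) (x |` A2)) &
      (forall U A, A `<=` U -> dist U A A = 0%R)].

Definition negation_closed (Lb : {fset word}) : Prop :=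
  forall i b, litw (i, b) \in Lb <-> litw (i, ~~ b) \in Lb.

Definition blowup_reducible (PT : (word -> word) -> Prop) (R : realFieldType)
    (dist : {fset word} -> {fset word} -> {fset word} -> R) (P : SSP) : Prop :=
  forall I, ssp_inst ThreeSat I ->
  forall Lb, Lb `<=` ssp_univ ThreeSat I -> negation_closed Lb ->
  exists g f, ssp_red PT ThreeSat P g f /\
  exists beta : word -> nat, PT (fun w => nat2word (beta w)) /\
    forall S1 S2, ssp_sol P (g I) S1 -> ssp_sol P (g I) S2 ->
      (fimg (f I) Lb `&` S1 = fimg (f I) Lb `&` S2 <->
       (dist (ssp_univ P (g I)) S1 S2 <= (beta I)%:R)%R).

(* Compose the reduction from 3Sat to P with the blow-up preserving reduction
   from P to P', keeping the same bound beta.  A solution S' of the composed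
   instance restricts, on the image B of the universe of P, to the image of a
   solution S of P; outside B every element lies in all or in no solution, so
   two solutions S1', S2' agree off B.  Invariance of dist under adding common
   elements and under injective maps then gives
   dist(S1', S2') = dist(S1, S2), and the traces on the image of Lb correspond
   by injectivity. *)
From mathcomp Require Import all_boot all_order all_algebra.
From mathcomp Require Import finmap.
From Stdlib Require Import FunctionalExtensionality.
Set Implicit Arguments. Unset Strict Implicit. Unset Printing Implicit Defensive.
Local Open Scope fset_scope.

Lemma unpairw_pairw x y : unpairw (pairw x y) = (x, y).
Proof. by elim: x => [|b x IH] //=; rewrite /pairw /= in IH *; rewrite eqxx IH. Qed.

Lemma fstw_pairw x y : fstw (pairw x y) = x.
Proof. by rewrite /fstw unpairw_pairw. Qed.

Lemma sndw_pairw x y : sndw (pairw x y) = y.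
Proof. by rewrite /sndw unpairw_pairw. Qed.

Lemma poly_class_comp_red PT (g : word -> word) (f f' : word -> word -> word) :
  poly_class PT -> PT g -> PT (fun w => f (fstw w) (sndw w)) ->
  PT (fun w => f' (fstw w) (sndw w)) ->
  PT (fun w => f' (g (fstw w)) (f (fstw w) (sndw w))).
Proof.
move=> [_ PTfst _ PTcomp PTpair] PTg PTf PTf'.
have -> : (fun w => f' (g (fstw w)) (f (fstw w) (sndw w))) =
          (fun w => f' (fstw w) (sndw w)) \o
          (fun w => pairw ((g \o fstw) w) (f (fstw w) (sndw w))).
  by apply: functional_extensionality => w /=; rewrite fstw_pairw sndw_pairw.
by apply: (PTcomp) => //; apply: PTpair => //; apply: PTcomp.
Qed.

Lemma fimg_comp (f1 f2 : word -> word) A :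
  fimg (fun u => f2 (f1 u)) A = fimg f2 (fimg f1 A).
Proof. by rewrite /fimg -imfset_comp. Qed.

Lemma fimgS f (A B : {fset word}) : A `<=` B -> fimg f A `<=` fimg f B.
Proof. by move=> /fsubsetP AB; apply: subset_imfset. Qed.

Lemma fimg_sub f (U U' A : {fset word}) :
  (forall x, x \in U -> f x \in U') -> A `<=` U -> fimg f A `<=` U'.
Proof.
move=> fU /fsubsetP AU; apply/fsubsetP => _ /imfsetP [x /= xA ->].
exact/fU/AU.
Qed.

Section InjectiveImage.

Variables (f : word -> word) (U : {fset word}).
Hypothesis f_inj : {in U &, injective f}.

Lemma fimg_inj A B : A `<=` U -> B `<=` U -> fimg f A = fimg f B -> A = B.
Proof.
move=> /fsubsetP AU /fsubsetP BU AB.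
suff sub C D : {subset C <= U} -> {subset D <= U} -> fimg f C = fimg f D ->
    C `<=` D.
  by apply/eqP; rewrite eqEfsubset !sub.
move=> CU DU CD; apply/fsubsetP => x xC.
have /imfsetP [y /= yD fxy] : f x \in fimg f D by rewrite -CD in_imfset.
by rewrite (f_inj (CU _ xC) (DU _ yD) fxy).
Qed.

Lemma fimgI A B : A `<=` U -> B `<=` U ->
  fimg f (A `&` B) = fimg f A `&` fimg f B.
Proof.
move=> /fsubsetP AU /fsubsetP BU; apply: imfsetI => x y xA yB.
exact: f_inj (AU _ xA) (BU _ yB).
Qed.

Lemma fimgI_trace L S S' : L `<=` U -> S `<=` U ->
  fimg f S = S' `&` fimg f U -> fimg f (L `&` S) = fimg f L `&` S'.
Proof.
move=> LU SU fS; rewrite fimgI // fS fsetIA [_ `&` S']fsetIC -fsetIA.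
by congr (_ `&` _); apply/fsetIidPl/fimgS.
Qed.

End InjectiveImage.

Lemma dist_fsetU (R : realFieldType) dist U (A1 A2 C : {fset word}) :
  @distance_measure R dist -> A1 `<=` U -> A2 `<=` U -> C `<=` U ->
  [disjoint C & A1 `|` A2] -> dist U (C `|` A1) (C `|` A2) = dist U A1 A2.
Proof.
move=> [_ _ dist_fset1U _] A1U A2U; elim/fset1U_rect: C => [|x C xC IH].
  by rewrite !fset0U.
rewrite fsubUset fsub1set fdisjointU1X => /andP [xU CU] /andP [xA CA].
rewrite -!fsetUA -IH //; apply/esym/dist_fset1U => //.
- by rewrite fsubUset CU A1U.
- by rewrite fsubUset CU A2U.
- by rewrite fsetUACA fsetUid in_fsetU negb_or xC xA.
Qed.

Lemma dist_trace (R : realFieldType) dist (f : word -> word)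
    (U U' S1 S2 S1' S2' : {fset word}) :
  @distance_measure R dist -> {in U &, injective f} ->
  (forall x, x \in U -> f x \in U') ->
  S1 `<=` U -> S2 `<=` U -> S1' `<=` U' ->
  fimg f S1 = S1' `&` fimg f U -> fimg f S2 = S2' `&` fimg f U ->
  S1' `\` fimg f U = S2' `\` fimg f U ->
  dist U' S1' S2' = dist U S1 S2.
Proof.
move=> dm f_inj fU S1U S2U S1'U' fS1 fS2 outside.
have [_ dist_inj _ _] := dm.
rewrite (dist_inj U U' f) // -(fsetID (fimg f U) S1') -(fsetID (fimg f U) S2').
rewrite -fS1 -fS2 -outside ![_ `|` (_ `\` _)]fsetUC dist_fsetU //.
- exact: fimg_sub fU S1U.
- exact: fimg_sub fU S2U.
- exact: fsubset_trans (fsubsetDl _ _) S1'U'.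
have /fsubsetDP [_ outsideB] := fsubset_refl (S1' `\` fimg f U).
by apply: fdisjointWr outsideB; rewrite fsubUset !fimgS.
Qed.

Section SspReduction.

Variables (PT : (word -> word) -> Prop) (P P' : SSP).
Variables (g : word -> word) (f : word -> word -> word).
Hypothesis red : ssp_red PT P P' g f.
Variable I : word.
Hypothesis HI : ssp_inst P I.

Lemma ssp_red_inst : ssp_inst P' (g I).
Proof. by case: red => _ inst _ _ _; apply: inst. Qed.

Lemma ssp_red_inj : {in ssp_univ P I &, injective (f I)}.
Proof. by case: red => _ _ _ univ _; case: (univ I HI). Qed.

Lemma ssp_red_univ u : u \in ssp_univ P I -> f I u \in ssp_univ P' (g I).
Proof. by case: red => _ _ _ univ _; case: (univ I HI) => _; apply. Qed.

Lemma ssp_red_sol S : ssp_sol P I S ->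
  exists2 S', ssp_sol P' (g I) S' & fimg (f I) S = S' `&` fimg (f I) (ssp_univ P I).
Proof.
case: red => _ _ _ _ corr solS.
have [fwd _] := corr I HI (fimg (f I) S).
by have [S' [solS' fS]] := fwd (ex_intro _ S (conj solS erefl)); exists S'.
Qed.

Lemma ssp_red_sol_inv S' : ssp_sol P' (g I) S' ->
  exists2 S, ssp_sol P I S & fimg (f I) S = S' `&` fimg (f I) (ssp_univ P I).
Proof.
case: red => _ _ _ _ corr solS'.
have [_ bwd] := corr I HI (S' `&` fimg (f I) (ssp_univ P I)).
by have [S [solS fS]] := bwd (ex_intro _ S' (conj solS' erefl)); exists S.
Qed.

End SspReduction.

Lemma ssp_red_comp PT (P Q P' : SSP) g f g' f' :
  poly_class PT -> ssp_red PT P Q g f -> ssp_red PT Q P' g' f' ->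
  ssp_red PT P P' (g' \o g) (fun I u => f' (g I) (f I u)).
Proof.
move=> PTc red red'.
have [[PTg PTf] _ _ _ _] := red; have [[PTg' PTf'] _ _ _ _] := red'.
have [_ _ _ PTcomp _] := PTc.
split.
- by split; [apply: PTcomp | exact: poly_class_comp_red PTc PTg PTf PTf'].
- by move=> I HI; exact: (ssp_red_inst red' (ssp_red_inst red HI)).
- move=> I HI; have [_ _ sol _ _] := red; have [_ _ sol' _ _] := red'.
  by rewrite (sol I HI) (sol' _ (ssp_red_inst red HI)).
- move=> I HI; have HQ := ssp_red_inst red HI.
  split=> [x y xU yU /= fxy | u uU]; last exact: (ssp_red_univ red' HQ (ssp_red_univ red HI uU)).
  apply: (ssp_red_inj red HI xU yU).
  by apply: (ssp_red_inj red' HQ) fxy; apply: (ssp_red_univ red HI).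
move=> I HI T; have HQ := ssp_red_inst red HI.
have UQ : fimg (f I) (ssp_univ P I) `<=` ssp_univ Q (g I).
  exact: fimg_sub (ssp_red_univ red HI) _.
have trace S S'' S' : ssp_sol Q (g I) S'' ->
    fimg (f I) S = S'' `&` fimg (f I) (ssp_univ P I) ->
    fimg (f' (g I)) S'' = S' `&` fimg (f' (g I)) (ssp_univ Q (g I)) ->
    fimg (fun u => f' (g I) (f I u)) S =
    S' `&` fimg (fun u => f' (g I) (f I u)) (ssp_univ P I).
  move=> solS'' fS f'S''; rewrite !(fimg_comp (f I)) fS fsetIC.
  by rewrite (fimgI_trace (ssp_red_inj red' HQ) UQ (ssp_sol_sub solS'') f'S'') fsetIC.
split=> [[S [solS ->]] | [S' [solS' ->]]].
- have [S'' solS'' fS] := ssp_red_sol red HI solS.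
  have [S' solS' f'S''] := ssp_red_sol red' HQ solS''.
  by exists S'; split=> //; apply: trace f'S''.
- have [S'' solS'' f'S''] := ssp_red_sol_inv red' HQ solS'.
  have [S solS fS] := ssp_red_sol_inv red HI solS''.
  by exists S; split=> //; rewrite (trace _ _ _ solS'' fS f'S'').
Qed.

Lemma blowup_preserving_sol_outside PT (P P' : SSP) g f I S1' S2' :
  blowup_preserving_red PT P P' g f -> ssp_inst P I ->
  ssp_sol P' (g I) S1' -> ssp_sol P' (g I) S2' ->
  S1' `\` fimg (f I) (ssp_univ P I) = S2' `\` fimg (f I) (ssp_univ P I).
Proof.
move=> [_ trichotomy] HI solS1' solS2'.
suff sub A1 A2 : ssp_sol P' (g I) A1 -> ssp_sol P' (g I) A2 ->
    A1 `\` fimg (f I) (ssp_univ P I) `<=` A2 `\` fimg (f I) (ssp_univ P I).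
  by apply/eqP; rewrite eqEfsubset !sub.
move=> solA1 solA2; apply/fsubsetP => x; rewrite !inE => /andP [xB xA1].
rewrite xB; have xU := fsubsetP (ssp_sol_sub solA1) x xA1.
case: (trichotomy I HI x xU) => [xB' | /(_ _ solA1) | /(_ _ solA2) //].
  by rewrite xB' in xB.
by rewrite xA1.
Qed.

Theorem theorem4 (PT : (word -> word) -> Prop) (R : realFieldType)
    (dist : {fset word} -> {fset word} -> {fset word} -> R) (P : SSP) :
  poly_class PT ->
  distance_measure dist ->
  ssp_np_complete PT P ->
  blowup_reducible PT dist P ->
  forall P' : SSP,
    (exists g f, blowup_preserving_red PT P P' g f) ->
    blowup_reducible PT dist P'.
Proof.
move=> PTc dm _ Pbr P' [g' [f' bp]] I HI Lb LbU Lbneg.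
have [red' _] := bp.
have [g [f [red [beta [PTbeta Hbeta]]]]] := Pbr I HI Lb LbU Lbneg.
exists (g' \o g), (fun I u => f' (g I) (f I u)).
split; first exact: ssp_red_comp red red'.
exists beta; split=> // S1' S2' solS1' solS2'.
have HQ := ssp_red_inst red HI.
have f'_inj := ssp_red_inj red' HQ.
have LbQ : fimg (f I) Lb `<=` ssp_univ P (g I).
  exact: fimg_sub (ssp_red_univ red HI) LbU.
have [S1 solS1 f'S1] := ssp_red_sol_inv red' HQ solS1'.
have [S2 solS2 f'S2] := ssp_red_sol_inv red' HQ solS2'.
have S1Q := ssp_sol_sub solS1; have S2Q := ssp_sol_sub solS2.
rewrite (dist_trace dm f'_inj (ssp_red_univ red' HQ) S1Q S2Q (ssp_sol_sub solS1')
  f'S1 f'S2 (blowup_preserving_sol_outside bp HQ solS1' solS2')).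
rewrite -Hbeta // !(fimg_comp (f I)) -(fimgI_trace f'_inj LbQ S1Q f'S1).
rewrite -(fimgI_trace f'_inj LbQ S2Q f'S2).
split=> [traces | -> //].
by apply: (fimg_inj f'_inj) traces; apply: fsubset_trans (fsubsetIl _ _) LbQ.
Qed.
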